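(* In the algebra $\mathcal O_q$ defined in the context, for all $n\in\mathbb N$: $$\mathcal W_{-n}=-(q-q^{-1})^{-1}\sum_{k=0}^n\sum_{\ell=0}^k\binom{k}{\ell}q^{k-2\ell}[2]_q^{-k-2}B_{(k-2\ell)\delta+\alpha_0}\tilde{\mathcal G}_{n-k},$$ $$\mathcal W_{n+1}=-(q-q^{-1})^{-1}\sum_{k=0}^n\sum_{\ell=0}^k\binom{k}{\ell}q^{2\ell-k}[2]_q^{-k-2}B_{(k-2\ell)\delta+\alpha_1}\tilde{\mathcal G}_{n-k}.$$
   Context: All algebras are associative and unital over a field $\mathbb F$; $q\in\mathbb F$ is nonzero and not a root of unity; $[n]_q=(q^n-q^{-n})/(q-q^{-1})$. For elements $X,Y$ of an algebra, $[X,Y]=XY-YX$ and $[X,Y]_q=qXY-q^{-1}YX$. Let $\rho=-(q^2-q^{-2})^2$. The algebra $\mathcal O_q$ is defined by generators $\mathcal W_{-k},\mathcal W_{k+1},\mathcal G_{k+1},\tilde{\mathcal G}_{k+1}$ ($k\in\mathbb N$) and the following relations for all $k,\ell\in\mathbb N$: $[\mathcal W_0,\mathcal W_{k+1}]=[\mathcal W_{-k},\mathcal W_1]=(\tilde{\mathcal G}_{k+1}-\mathcal G_{k+1})/(q+q^{-1})$; $[\mathcal W_0,\mathcal G_{k+1}]_q=[\tilde{\mathcal G}_{k+1},\mathcal W_0]_q=\rho\mathcal W_{-k-1}-\rho\mathcal W_{k+1}$; $[\mathcal G_{k+1},\mathcal W_1]_q=[\mathcal W_1,\tilde{\mathcal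 G}_{k+1}]_q=\rho\mathcal W_{k+2}-\rho\mathcal W_{-k}$; $[\mathcal W_{-k},\mathcal W_{-\ell}]=0$, $[\mathcal W_{k+1},\mathcal W_{\ell+1}]=0$; $[\mathcal W_{-k},\mathcal W_{\ell+1}]+[\mathcal W_{k+1},\mathcal W_{-\ell}]=0$; $[\mathcal W_{-k},\mathcal G_{\ell+1}]+[\mathcal G_{k+1},\mathcal W_{-\ell}]=0$; $[\mathcal W_{-k},\tilde{\mathcal G}_{\ell+1}]+[\tilde{\mathcal G}_{k+1},\mathcal W_{-\ell}]=0$; $[\mathcal W_{k+1},\mathcal G_{\ell+1}]+[\mathcal G_{k+1},\mathcal W_{\ell+1}]=0$; $[\mathcal W_{k+1},\tilde{\mathcal G}_{\ell+1}]+[\tilde{\mathcal G}_{k+1},\mathcal W_{\ell+1}]=0$; $[\mathcal G_{k+1},\mathcal G_{\ell+1}]=0$, $[\tilde{\mathcal G}_{k+1},\tilde{\mathcal G}_{\ell+1}]=0$; $[\tilde{\mathcal G}_{k+1},\mathcal G_{\ell+1}]+[\mathcal G_{k+1},\tilde{\mathcal G}_{\ell+1}]=0$. Convention: $\tilde{\mathcal G}_0=-(q-q^{-1})[2]_q^2$. Define $B_\delta=q^{-2}\mathcal W_1\mathcal W_0-\mathcal W_0\mathcal W_1$; $B_{\alpha_0}=\mathcal W_0$, $B_{\delta+\alpha_0}=\mathcal W_1+\frac{q[B_\delta,\mathcal W_0]}{(q-q^{-1})(q^2-q^{-2})}$, $B_{n\delta+\alpha_0}=B_{(n-2)\delta+\alpha_0}+\frac{q[B_\delta,B_{(n-1)\delta+\alpha_0}]}{(q-q^{-1})(q^2-q^{-2})}$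 for $n\ge2$; $B_{\alpha_1}=\mathcal W_1$, $B_{\delta+\alpha_1}=\mathcal W_0-\frac{q[B_\delta,\mathcal W_1]}{(q-q^{-1})(q^2-q^{-2})}$, $B_{n\delta+\alpha_1}=B_{(n-2)\delta+\alpha_1}-\frac{q[B_\delta,B_{(n-1)\delta+\alpha_1}]}{(q-q^{-1})(q^2-q^{-2})}$ for $n\ge2$. For negative integers $k$, set $B_{k\delta+\alpha_0}=B_{(-k-1)\delta+\alpha_1}$ and $B_{k\delta+\alpha_1}=B_{(-k-1)\delta+\alpha_0}$. *)

From HB Require Import structures.
From mathcomp Require Import all_boot all_order all_algebra.
Set Implicit Arguments. Unset Strict Implicit. Unset Printing Implicit Defensive.
Import Order.TTheory GRing.Theory Num.Theory.
Local Open Scope ring_scope.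

(* Encoding of the generators of O_q in an F-algebra A:
     Wn k = W_{-k},  Wp k = W_{k+1},  G k = G_{k+1},  Gt k = tilde G_{k+1}  (k : nat). *)

Section Oq.
Variables (F : fieldType) (A : algType F) (q : F).

Definition comm (X Y : A) : A := X * Y - Y * X.
Definition qcomm (X Y : A) : A := q *: (X * Y) - q^-1 *: (Y * X).

Definition qint (n : nat) : F := (q ^+ n - q ^- n) / (q - q^-1).

Definition rho : F := - (q ^+ 2 - q ^- 2) ^+ 2.

Record Oq_rels (Wn Wp G Gt : nat -> A) : Prop := {
  rel1a : forall k, comm (Wn 0%N) (Wp k) = (q + q^-1)^-1 *: (Gt k - G k);
  rel1b : forall k, comm (Wn k) (Wp 0%N) = (q + q^-1)^-1 *: (Gt k - G k);
  rel2a : forall k, qcomm (Wn 0%N) (G k) = rho *: (Wn k.+1 - Wp k);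
  rel2b : forall k, qcomm (Gt k) (Wn 0%N) = rho *: (Wn k.+1 - Wp k);
  rel3a : forall k, qcomm (G k) (Wp 0%N) = rho *: (Wp k.+1 - Wn k);
  rel3b : forall k, qcomm (Wp 0%N) (Gt k) = rho *: (Wp k.+1 - Wn k);
  rel4a : forall k l, comm (Wn k) (Wn l) = 0;
  rel4b : forall k l, comm (Wp k) (Wp l) = 0;
  rel5 : forall k l, comm (Wn k) (Wp l) + comm (Wp k) (Wn l) = 0;
  rel6 : forall k l, comm (Wn k) (G l) + comm (G k) (Wn l) = 0;
  rel7 : forall k l, comm (Wn k) (Gt l) + comm (Gt k) (Wn l) = 0;
  rel8 : forall k l, comm (Wp k) (G l) + comm (G k) (Wp l) = 0;
  rel9 : forall k l, comm (Wp k) (Gt l) + comm (Gt k) (Wp l) = 0;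
  rel10a : forall k l, comm (G k) (G l) = 0;
  rel10b : forall k l, comm (Gt k) (Gt l) = 0;
  rel11 : forall k l, comm (Gt k) (G l) + comm (G k) (Gt l) = 0 }.

Variables (Wn Wp G Gt : nat -> A).

Definition W0 : A := Wn 0%N.
Definition W1 : A := Wp 0%N.

(* tilde G_m with the convention tilde G_0 = -(q - q^-1)[2]_q^2 *)
Definition Gtext (m : nat) : A :=
  if m is m'.+1 then Gt m' else (- (q - q^-1) * qint 2 ^+ 2)%:A.

Definition Bdelta : A := q ^- 2 *: (W1 * W0) - W0 * W1.

Definition Bcoef : F := q / ((q - q^-1) * (q ^+ 2 - q ^- 2)).

Fixpoint Bpair (x0 x1 : A) (f : A -> A) (n : nat) : A * A :=
  if n is n'.+1 then let p := Bpair x0 x1 f n' in (p.2, p.1 + f p.2)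
  else (x0, x1).

Definition Ba0 (n : nat) : A :=
  (Bpair W0 (W1 + Bcoef *: comm Bdelta W0) (fun X => Bcoef *: comm Bdelta X) n).1.
Definition Ba1 (n : nat) : A :=
  (Bpair W1 (W0 - Bcoef *: comm Bdelta W1) (fun X => - (Bcoef *: comm Bdelta X)) n).1.

(* integer-indexed versions: B_{k delta+alpha_0} = B_{(-k-1) delta+alpha_1} for k<0 *)
Definition Ba0z (m : int) : A :=
  match m with Posz n => Ba0 n | Negz n => Ba1 n end.
Definition Ba1z (m : int) : A :=
  match m with Posz n => Ba1 n | Negz n => Ba0 n end.

End Oq.

From HB Require Import structures.
From mathcomp Require Import all_boot all_order all_algebra.
From mathcomp Require Import zify ring.
Import GRing.Theory.
Local Open Scope ring_scope.
Set Implicit Arguments. Unset Strict Implicit. Unset Printing Implicit Defensive.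

(* The relations with [k = 0] say that [K := tilde G_1 + q B_delta] commutes
   with [W_0] and [W_1], hence with every [B_{m delta + alpha_i}], these being
   noncommutative polynomials in [W_0] and [W_1]. The relations with [k = n]
   express [W_{-n-1}] and [W_{n+2}] through [W_{n+1}], [W_{-n}] and their
   commutators with [tilde G_1]. On the closed forms [ad tilde G_1] therefore acts
   as [- q ad B_delta], which by the defining recursion sends [B_{m delta + alpha}]
   to a multiple of [B_{(m+1) delta + alpha} - B_{(m-1) delta + alpha}]; Pascal's
   rule turns these shifted binomial sums of level [k] into those of level [k + 1],
   and the formulas follow by induction on [n]. *)

Section Commutators.
Variables (F : fieldType) (A : algType F).
Implicit Types (x y z : A) (a : F).

Lemma comm_antisym x y : comm x y = - comm y x.
Proof. by rewrite /comm opprB. Qed.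

Lemma commDr z x y : comm z (x + y) = comm z x + comm z y.
Proof. by rewrite /comm mulrDr mulrDl opprD addrACA. Qed.

Lemma commZr z a x : comm z (a *: x) = a *: comm z x.
Proof. by rewrite /comm scalerBr -scalerAr -scalerAl. Qed.

Lemma commMr z x y : comm z (x * y) = comm z x * y + x * comm z y.
Proof. by rewrite /comm mulrBl mulrBr !mulrA addrA subrK. Qed.

Lemma commDl z x y : comm (x + y) z = comm x z + comm y z.
Proof. by rewrite comm_antisym commDr opprD -!comm_antisym. Qed.

Lemma commZl z a x : comm (a *: x) z = a *: comm x z.
Proof. by rewrite comm_antisym commZr -scalerN -comm_antisym. Qed.

Lemma comm_sumr z I (r : seq I) (P : pred I) (f : I -> A) :
  comm z (\sum_(i <- r | P i) f i) = \sum_(i <- r | P i) comm z (f i).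
Proof.
elim/big_rec2: _ => [|i u v _ <-]; last by rewrite commDr.
by rewrite /comm mulr0 mul0r subr0.
Qed.

Lemma mulr_commE x y : y * x = x * y + comm y x.
Proof. by rewrite /comm addrC subrK. Qed.

Lemma comm_sum_eq0 x y u v : comm x y + comm u v = 0 -> comm u v = comm y x.
Proof. by move/eqP; rewrite addrC addr_eq0 => /eqP ->; rewrite comm_antisym opprK. Qed.

Lemma comm_eq0P x y : comm x y = 0 <-> GRing.comm x y.
Proof. by rewrite /comm /GRing.comm; split=> [/eqP|->]; rewrite ?subrr // subr_eq0 => /eqP. Qed.

Lemma commrZ x a y : GRing.comm x y -> GRing.comm x (a *: y).
Proof. by move=> cxy; rewrite -mulr_algl; apply: commrM => //; apply/commr_sym/comm_alg. Qed.

Lemma commr_comm z x y : GRing.comm z x -> GRing.comm z y -> GRing.comm z (comm x y).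
Proof. by move=> czx czy; apply: commrB; apply: commrM. Qed.

Variable q : F.

Lemma qcommBr z x y : qcomm q z (x - y) = qcomm q z x - qcomm q z y.
Proof. by rewrite /qcomm mulrBr mulrBl !scalerBr !opprD addrACA. Qed.

Lemma qcommBl z x y : qcomm q (x - y) z = qcomm q x z - qcomm q y z.
Proof. by rewrite /qcomm mulrBr mulrBl !scalerBr !opprD addrACA. Qed.

Lemma qcommZr a x y : qcomm q x (a *: y) = a *: qcomm q x y.
Proof. by rewrite /qcomm scalerBr -scalerAr -scalerAl !scalerA mulrC (mulrC _ a). Qed.

Lemma qcommZl a x y : qcomm q (a *: x) y = a *: qcomm q x y.
Proof. by rewrite /qcomm scalerBr -scalerAr -scalerAl !scalerA mulrC (mulrC _ a). Qed.

End Commutators.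

Lemma sum_scale_mulr (F : fieldType) (A : algType F) m (a : 'I_m -> F) (x : 'I_m -> A) y w :
  \sum_(l < m) (a l * w) *: (x l * y) = w *: ((\sum_(l < m) a l *: x l) * y).
Proof.
rewrite mulr_suml scaler_sumr; apply: eq_bigr => l _.
by rewrite -scalerAl scalerA mulrC.
Qed.

Lemma eq_add_scaleV (F : fieldType) (V : lmodType F) (k : F) (x y z : V) :
  k != 0 -> k *: (x - y) = z -> x = y + k^-1 *: z.
Proof. by move=> k_neq0 <-; rewrite scalerK // addrC subrK. Qed.

(* [ring] does not apply in a noncommutative algebra, so an identity between
   linear combinations of at most three fixed products is reduced to identities
   between their coefficients. The products are hidden behind the local
   definition [p], so that rewriting one of them leaves the others untouched. *)
Section LinearCombinations.
Variables (F : fieldType) (A : lmodType F).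
Implicit Types (p : A * A * A) (a b c : F).

Definition lincomb3 p a b c : A := a *: p.1.1 + b *: p.1.2 + c *: p.2.

Lemma lincomb3D p a b c a' b' c' :
  lincomb3 p a b c + lincomb3 p a' b' c' = lincomb3 p (a + a') (b + b') (c + c').
Proof. by rewrite /lincomb3 !scalerDl addrACA (addrACA (a *: _)). Qed.

Lemma lincomb3N p a b c : - lincomb3 p a b c = lincomb3 p (- a) (- b) (- c).
Proof. by rewrite /lincomb3 !opprD !scaleNr. Qed.

Lemma lincomb3B p a b c a' b' c' :
  lincomb3 p a b c - lincomb3 p a' b' c' = lincomb3 p (a - a') (b - b') (c - c').
Proof. by rewrite lincomb3N lincomb3D. Qed.

Lemma lincomb3Z p k a b c : k *: lincomb3 p a b c = lincomb3 p (k * a) (k * b) (k * c).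
Proof. by rewrite /lincomb3 !scalerDr !scalerA. Qed.

Lemma lincomb3_1 p : p.1.1 = lincomb3 p 1 0 0.
Proof. by rewrite /lincomb3 scale1r !scale0r !addr0. Qed.

Lemma lincomb3_2 p : p.1.2 = lincomb3 p 0 1 0.
Proof. by rewrite /lincomb3 scale1r !scale0r add0r addr0. Qed.

Lemma lincomb3_3 p : p.2 = lincomb3 p 0 0 1.
Proof. by rewrite /lincomb3 scale1r !scale0r !add0r. Qed.

Lemma lincomb3_congr p a b c a' b' c' :
  a = a' -> b = b' -> c = c' -> lincomb3 p a b c = lincomb3 p a' b' c'.
Proof. by move=> -> -> ->. Qed.

End LinearCombinations.

Ltac lincomb3_coefficients :=
  rewrite ?(lincomb3D, lincomb3B, lincomb3N, lincomb3Z); apply: lincomb3_congr.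

Ltac coefficients2 u v :=
  let p := fresh "p" in
  let T := type of u in
  pose p := (u, v, 0 : T);
  have -> : u = lincomb3 p 1 0 0 := lincomb3_1 p;
  have -> : v = lincomb3 p 0 1 0 := lincomb3_2 p;
  lincomb3_coefficients.

Ltac coefficients3 u v w :=
  let p := fresh "p" in
  pose p := (u, v, w);
  have -> : u = lincomb3 p 1 0 0 := lincomb3_1 p;
  have -> : v = lincomb3 p 0 1 0 := lincomb3_2 p;
  have -> : w = lincomb3 p 0 0 1 := lincomb3_3 p;
  lincomb3_coefficients.

Section QCommutatorIdentities.
Variables (F : fieldType) (A : algType F) (q : F).
Hypothesis q_neq0 : q != 0.
Implicit Types (x y : A).

Lemma qcomm_sub_sym x y : qcomm q x y - qcomm q y x = (q + q^-1) *: comm x y.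
Proof. by rewrite /qcomm /comm; coefficients2 (x * y) (y * x); ring. Qed.

Lemma qcomm_comm_l x y :
  qcomm q x (comm x y) = q *: comm (q ^- 2 *: (y * x) - x * y) x.
Proof.
rewrite /qcomm /comm !(mulrBr, mulrBl) -!scalerAl -!scalerAr !mulrA.
by coefficients3 (x * x * y) (x * y * x) (y * x * x); field.
Qed.

Lemma qcomm_comm_r x y :
  qcomm q (comm x y) y = - (q *: comm (q ^- 2 *: (y * x) - x * y) y).
Proof.
rewrite /qcomm /comm !(mulrBr, mulrBl) -!scalerAl -!scalerAr !mulrA.
by coefficients3 (x * y * y) (y * x * y) (y * y * x); field.
Qed.

End QCommutatorIdentities.

Lemma sum_binomS (F : fieldType) (A : lmodType F) (f : nat -> A) j :
  \sum_(l < j.+2) 'C(j.+1, l)%:R *: f l =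
  \sum_(l < j.+1) 'C(j, l)%:R *: f l + \sum_(l < j.+1) 'C(j, l)%:R *: f l.+1.
Proof.
rewrite big_ord_recl bin0 scale1r.
under eq_bigr => i _ do rewrite lift0 binS natrD scalerDl.
rewrite big_split /= big_ord_recr /= bin_small // scale0r addr0.
rewrite [X in _ = X + _]big_ord_recl bin0 scale1r addrA.
by under [X in _ = _ + X + _]eq_bigr => i _ do rewrite lift0.
Qed.

Lemma Bpair_fst_ind (F : fieldType) (A : algType F) (P : A -> Prop) x0 x1 f :
  P x0 -> P x1 -> (forall x, P x -> P (f x)) ->
  (forall x y, P x -> P y -> P (x + y)) ->
  forall n, P (Bpair x0 x1 f n).1.
Proof.
move=> P0 P1 Pf PD n; suff: P (Bpair x0 x1 f n).1 /\ P (Bpair x0 x1 f n).2 by case.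
by elim: n => [|n [IH1 IH2]] //=; split; last apply: PD; auto.
Qed.

Section QNumbers.
Variables (F : fieldType) (q : F).
Hypotheses (q_neq0 : q != 0) (q4_neq1 : q ^+ 4 != 1).

Lemma q2_sub1_neq0 : q ^+ 2 - 1 != 0.
Proof.
apply: contraNneq q4_neq1 => /eqP; rewrite subr_eq0 => /eqP q2.
by rewrite (exprM q 2 2) q2 expr1n.
Qed.

Lemma q2_add1_neq0 : q ^+ 2 + 1 != 0.
Proof.
apply: contraNneq q4_neq1 => /eqP; rewrite addr_eq0 => /eqP q2.
by rewrite (exprM q 2 2) q2 sqrrN expr1n.
Qed.

Lemma qDqV_neq0 : q + q^-1 != 0.
Proof.
have -> : q + q^-1 = (q ^+ 2 + 1) / q by field.
by rewrite mulf_neq0 ?invr_eq0 ?q2_add1_neq0.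
Qed.

Lemma rho_neq0 : rho q != 0.
Proof.
rewrite /rho; have -> : q ^+ 2 - q ^- 2 = (q ^+ 4 - 1) / q ^+ 2 by field.
by rewrite oppr_eq0 expf_neq0 // mulf_neq0 ?invr_eq0 ?expf_neq0 ?subr_eq0.
Qed.

Lemma qint2 : qint q 2 = q + q^-1.
Proof. by rewrite /qint; field; rewrite q_neq0 -expr2 q2_sub1_neq0. Qed.

(* The nondegeneracy conditions in the form in which [field] generates them. *)
Lemma field_conditions : [&& q != 0, q * q + 1 != 0 & q * q - 1 != 0].
Proof. by rewrite q_neq0 -expr2 q2_add1_neq0 q2_sub1_neq0. Qed.

Lemma field_conditions_sq :
  [&& q != 0, (q * q) ^+ 2 - 1 != 0, q * q - 1 != 0, q * q + 1 != 0
    & - ((q * q) ^+ 2 - 1) ^+ 2 != 0].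
Proof.
have q4_sub1 : (q * q) ^+ 2 - 1 != 0 by rewrite -expr2 -exprM subr_eq0.
by rewrite q_neq0 q4_sub1 -expr2 q2_add1_neq0 q2_sub1_neq0 oppr_eq0 expf_neq0.
Qed.

End QNumbers.

Section BinomialSums.
Variables (F : fieldType) (A : algType F) (q : F) (Wn Wp : nat -> A).

Local Notation t := (q + q^-1).
Local Notation Bd := (Bdelta q Wn Wp).
Local Notation c := (Bcoef q).
Local Notation B := (Ba0z q Wn Wp).

Lemma Ba0z_rec m : B (m + 1) = B (m - 1) + c *: comm Bd (B m).
Proof.
case: m => [[|n]|[|n]] //.
- by have [-> ->] : n.+1%:Z + 1 = n.+2 /\ n.+1%:Z - 1 = n by lia.
- by rewrite /= /Ba1 /Ba0 /= subrK.
- have [-> ->] : Negz n.+1 + 1 = Negz n /\ Negz n.+1 - 1 = Negz n.+2 by lia.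
  by rewrite /= /Ba1 /= subrK.
Qed.

Lemma Ba0z_difference m : c *: comm Bd (B m) = B (m + 1) - B (m - 1).
Proof. by rewrite Ba0z_rec addrAC subrr add0r. Qed.

Lemma Ba1z_Ba0z m : Ba1z q Wn Wp m = B (- m - 1).
Proof.
case: m => n.
- by rewrite (_ : - n%:Z - 1 = Negz n); last lia.
- by rewrite (_ : - Negz n - 1 = n%:Z); last lia.
Qed.

(* The shift [s] covers both families: [s = -1] gives the [alpha_1] sums, since
   [B_{k delta + alpha_1} = B_{(-k-1) delta + alpha_0}]. *)
Definition Bsum (s : int) (j : nat) : A :=
  \sum_(l < j.+1) ('C(j, l)%:R * q ^ (j%:Z - (2 * l)%:Z)) *: B (j%:Z - (2 * l)%:Z + s).

Lemma Bsum0 s : Bsum s 0 = B s.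
Proof. by rewrite /Bsum big_ord1 /= expr0z mulr1 scale1r add0r. Qed.

Lemma Bsum_alpha0E j :
  Bsum 0 j = \sum_(l < j.+1) ('C(j, l)%:R * q ^ (j%:Z - (2 * l)%:Z)) *: B (j%:Z - (2 * l)%:Z).
Proof. by apply: eq_bigr => l _; rewrite addr0. Qed.

Lemma Bsum_alpha1E j : Bsum (-1) j = \sum_(l < j.+1)
  ('C(j, l)%:R * q ^ ((2 * l)%:Z - j%:Z)) *: Ba1z q Wn Wp (j%:Z - (2 * l)%:Z).
Proof.
rewrite /Bsum (reindex_inj rev_ord_inj) /=; apply: eq_bigr => l _.
have l_le_j : (l <= j)%N by rewrite -ltnS ltn_ord.
by rewrite subSS bin_sub // Ba1z_Ba0z; congr (_ * q ^ _ *: B _); lia.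
Qed.

Lemma comm_Bdelta_Bsum s j : c *: comm Bd (Bsum s j) = Bsum (s + 1) j - Bsum (s - 1) j.
Proof.
rewrite /Bsum comm_sumr scaler_sumr -sumrB; apply: eq_bigr => l _.
rewrite commZr scalerA (mulrC c) -(scalerA _ c) Ba0z_difference scalerBr.
by rewrite -!addrA.
Qed.

Hypothesis q_neq0 : q != 0.

Lemma Bsum_pascal s j : Bsum s j.+1 = q *: Bsum (s + 1) j + q^-1 *: Bsum (s - 1) j.
Proof.
rewrite /Bsum; under eq_bigr => l _ do rewrite -scalerA.
rewrite (sum_binomS (fun l => q ^ (j.+1%:Z - (2 * l)%:Z) *: B (j.+1%:Z - (2 * l)%:Z + s))).
rewrite !scaler_sumr; congr (_ + _); apply: eq_bigr => l _; rewrite !scalerA.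
- rewrite (_ : j.+1%:Z - (2 * l)%:Z = (j%:Z - (2 * l)%:Z) + 1); last lia.
  congr (_ *: B _); last lia.
  by rewrite expfzDr // expr1z; ring.
- rewrite (_ : j.+1%:Z - (2 * l.+1)%:Z = (j%:Z - (2 * l)%:Z) - 1); last lia.
  congr (_ *: B _); last lia.
  by rewrite expfzDr // exprN1; ring.
Qed.

Lemma BsumS_alpha0 j : Bsum 0 j.+1 = t *: Bsum (-1) j + (q * c) *: comm Bd (Bsum 0 j).
Proof.
rewrite Bsum_pascal -scalerA comm_Bdelta_Bsum add0r sub0r.
by coefficients2 (Bsum 1 j) (Bsum (-1) j); ring.
Qed.

Lemma BsumS_alpha1 j :
  Bsum (-1) j.+1 = t *: Bsum 0 j - (q^-1 * c) *: comm Bd (Bsum (-1) j).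
Proof.
rewrite Bsum_pascal -scalerA comm_Bdelta_Bsum addNr.
by coefficients2 (Bsum 0 j) (Bsum (-2) j); ring.
Qed.

End BinomialSums.

Section Oq.
Variables (F : fieldType) (A : algType F) (q : F).
Hypotheses (q_neq0 : q != 0) (q4_neq1 : q ^+ 4 != 1).
Variables (Wn Wp G Gt : nat -> A).
Hypothesis rels : Oq_rels q Wn Wp G Gt.

Local Notation t := (q + q^-1).
Local Notation Bd := (Bdelta q Wn Wp).
Local Notation c := (Bcoef q).
Local Notation B := (Ba0z q Wn Wp).
Local Notation Bsum := (Bsum q Wn Wp).
Local Notation K := (Gt 0%N + q *: Bd).

Lemma G1E : G 0%N = Gt 0%N - t *: comm (W0 Wn) (W1 Wp).
Proof. by rewrite (rel1a rels 0) scalerA mulfV ?qDqV_neq0 // scale1r opprB addrC subrK. Qed.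

Lemma commr_W0 : GRing.comm K (W0 Wn).
Proof.
have e : qcomm q (W0 Wn) (G 0%N) = qcomm q (Gt 0%N) (W0 Wn).
  by rewrite (rel2a rels) (rel2b rels).
rewrite G1E qcommBr qcommZr qcomm_comm_l // in e.
move/eqP: e; rewrite subr_eq => /eqP e.
apply/comm_eq0P/(scalerI (qDqV_neq0 q_neq0 q4_neq1)).
by rewrite scaler0 commDl commZl scalerDr -qcomm_sub_sym e opprD addrA subrr sub0r addNr.
Qed.

Lemma commr_W1 : GRing.comm K (W1 Wp).
Proof.
have e : qcomm q (G 0%N) (W1 Wp) = qcomm q (W1 Wp) (Gt 0%N).
  by rewrite (rel3a rels) (rel3b rels).
rewrite G1E qcommBl qcommZl qcomm_comm_r // scalerN opprK in e.
apply/comm_eq0P/(scalerI (qDqV_neq0 q_neq0 q4_neq1)).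
by rewrite scaler0 commDl commZl scalerDr -qcomm_sub_sym -e opprD addrA subrr sub0r addNr.
Qed.

Lemma commr_Bdelta : GRing.comm K Bd.
Proof. by apply: commrB; [apply: commrZ|]; apply: commrM; (exact: commr_W0 || exact: commr_W1). Qed.

Lemma commr_Ba0z m : GRing.comm K (B m).
Proof.
have commr_next x : GRing.comm K x -> GRing.comm K (c *: comm Bd x).
  by move=> cx; apply/commrZ/commr_comm => //; exact: commr_Bdelta.
have [cW0 cW1] := (commr_W0, commr_W1).
case: m => n; [rewrite /= /Ba0|rewrite /= /Ba1]; apply: Bpair_fst_ind => //.
- by apply: commrD; last exact: commr_next.
- exact: commrD.
- by apply: commrB; last exact: commr_next.
- by move=> x /commr_next/commrN.
- exact: commrD.
Qed.

Lemma commr_Bsum s j : GRing.comm K (Bsum s j).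
Proof. by apply: commr_sum => l _; apply/commrZ/commr_Ba0z. Qed.

Lemma comm_Gt1 x : GRing.comm K x -> comm (Gt 0%N) x = - (q *: comm Bd x).
Proof. by move/comm_eq0P; rewrite commDl commZl => /eqP; rewrite addr_eq0 => /eqP. Qed.

Lemma comm_Gt1_Gtext m : comm (Gt 0%N) (Gtext q Gt m) = 0.
Proof. by case: m => [|m] /=; [apply/comm_eq0P/commr_sym/comm_alg | exact: (rel10b rels)]. Qed.

Definition Gsum (s : int) (n : nat) : A :=
  \sum_(k < n.+1) t^-1 ^+ k *: (Bsum s k * Gtext q Gt (n - k)).

Definition adGsum (s : int) (n : nat) : A :=
  \sum_(k < n.+1) t^-1 ^+ k *: (comm Bd (Bsum s k) * Gtext q Gt (n - k)).

Lemma comm_Gt1_Gsum s n : comm (Gt 0%N) (Gsum s n) = - (q *: adGsum s n).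
Proof.
rewrite /Gsum /adGsum comm_sumr scaler_sumr -sumrN; apply: eq_bigr => k _.
rewrite commZr commMr comm_Gt1_Gtext mulr0 addr0 (comm_Gt1 (commr_Bsum s k)).
by rewrite mulNr -scalerAl scalerN !scalerA mulrC.
Qed.

Lemma GsumS_alpha0 n :
  Gsum 0 n.+1 = W0 Wn * Gt n + (Gsum (-1) n + (t^-1 * (q * c)) *: adGsum 0 n).
Proof.
rewrite /Gsum big_ord_recl expr0 scale1r subn0 Bsum0 /=; congr (_ + _).
under eq_bigr => k _ do rewrite ?lift0 ?subSS BsumS_alpha0 // mulrDl -!scalerAl scalerDr !scalerA.
rewrite big_split /=; congr (_ + _).
  by apply: eq_bigr => k _; rewrite exprS mulrAC mulVf ?qDqV_neq0 // mul1r.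
rewrite /adGsum scaler_sumr; apply: eq_bigr => k _.
by rewrite scalerA exprS; congr (_ *: _); ring.
Qed.

Lemma GsumS_alpha1 n :
  Gsum (-1) n.+1 = W1 Wp * Gt n + (Gsum 0 n - (t^-1 * (q^-1 * c)) *: adGsum (-1) n).
Proof.
rewrite /Gsum big_ord_recl expr0 scale1r subn0 Bsum0 /=; congr (_ + _).
under eq_bigr => k _ do rewrite ?lift0 ?subSS BsumS_alpha1 // mulrBl -!scalerAl scalerBr !scalerA.
rewrite sumrB /=; congr (_ - _).
  by apply: eq_bigr => k _; rewrite exprS mulrAC mulVf ?qDqV_neq0 // mul1r.
rewrite /adGsum scaler_sumr; apply: eq_bigr => k _.
by rewrite scalerA exprS; congr (_ *: _); ring.
Qed.

Lemma Wn_succ n : Wn n.+1 =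
  Wp n + (rho q)^-1 *: ((q - q^-1) *: (W0 Wn * Gt n) + q *: comm (Gt 0%N) (Wn n)).
Proof.
apply: (eq_add_scaleV (rho_neq0 q_neq0 q4_neq1)).
rewrite -(rel2b rels) /qcomm (mulr_commE (W0 Wn)) (comm_sum_eq0 (rel7 rels n 0)).
by coefficients2 (W0 Wn * Gt n) (comm (Gt 0%N) (Wn n)); ring.
Qed.

Lemma Wp_succ n : Wp n.+1 =
  Wn n + (rho q)^-1 *: ((q - q^-1) *: (W1 Wp * Gt n) - q^-1 *: comm (Gt 0%N) (Wp n)).
Proof.
apply: (eq_add_scaleV (rho_neq0 q_neq0 q4_neq1)).
rewrite -(rel3b rels) /qcomm (mulr_commE (W1 Wp)) (comm_sum_eq0 (rel9 rels n 0)).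
by coefficients2 (W1 Wp * Gt n) (comm (Gt 0%N) (Wp n)); ring.
Qed.

Local Notation kappa := (- ((q - q^-1)^-1 * t^-1 ^+ 2)).

Lemma W_closed_form n : Wn n = kappa *: Gsum 0 n /\ Wp n = kappa *: Gsum (-1) n.
Proof.
elim: n => [|n [IHn IHp]].
  rewrite /Gsum !big_ord1 /= expr0 scale1r !Bsum0 /= !mulr_algr !scalerA.
  by split; rewrite -[LHS]scale1r; congr (_ *: _); rewrite qint2 //; field;
    exact: field_conditions.
split.
- rewrite Wn_succ IHp IHn commZr comm_Gt1_Gsum GsumS_alpha0.
  coefficients3 (W0 Wn * Gt n) (Gsum (-1) n) (adGsum 0 n);
  by rewrite /rho /Bcoef; field; exact: field_conditions_sq.
- rewrite Wp_succ IHn IHp commZr comm_Gt1_Gsum GsumS_alpha1.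
  coefficients3 (W1 Wp * Gt n) (Gsum 0 n) (adGsum (-1) n);
  by rewrite /rho /Bcoef; field; exact: field_conditions_sq.
Qed.

End Oq.

Theorem proposition11p7 (F : fieldType) (A : algType F) (q : F)
  (q_neq0 : q != 0) (q_not_root : forall m : nat, (0 < m)%N -> q ^+ m != 1)
  (Wn Wp G Gt : nat -> A) (rels : Oq_rels q Wn Wp G Gt) (n : nat) :
  Wn n = - ((q - q^-1)^-1 *:
     \sum_(k < n.+1) \sum_(l < k.+1)
        (('C(k, l))%:R * q ^ (k%:Z - (2 * l)%:Z) * (qint q 2)^-1 ^+ (k + 2)) *:
          (Ba0z q Wn Wp (k%:Z - (2 * l)%:Z) * Gtext q Gt (n - k)))
  /\
  Wp n = - ((q - q^-1)^-1 *:
     \sum_(k < n.+1) \sum_(l < k.+1)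
        (('C(k, l))%:R * q ^ ((2 * l)%:Z - k%:Z) * (qint q 2)^-1 ^+ (k + 2)) *:
          (Ba1z q Wn Wp (k%:Z - (2 * l)%:Z) * Gtext q Gt (n - k))).
Proof.
have q4_neq1 : q ^+ 4 != 1 by exact: q_not_root.
have [-> ->] := W_closed_form q_neq0 q4_neq1 rels n.
rewrite (qint2 q_neq0 q4_neq1) -!scaleNr !scaler_sumr.
split; apply: eq_bigr => k _; rewrite sum_scale_mulr.
- by rewrite -Bsum_alpha0E !scalerA exprD; congr (_ *: _); field; exact: field_conditions.
- by rewrite -Bsum_alpha1E !scalerA exprD; congr (_ *: _); field; exact: field_conditions.
Qed.
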